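(* Let $H$ be a graph on $n$ vertices and let $G=K_{1}\vee H$, where $V(K_1)=\{u\}$. Then $\uparrow^{2}G$ has Laplacian perfect state transfer at time $\frac{\pi}{2}$ between $(0,u)$ and $(1,u)$ if and only if $n$ is odd.
   Context: All graphs are simple, undirected and unweighted. The join $K_1\vee H$ is obtained from $H$ by adding a new vertex $u$ adjacent to all vertices of $H$. The blow-up $\uparrow^{2}G$ has vertex set $\mathbb{Z}_2\times V(G)$, with $(l,a)\sim(m,b)$ iff $a\sim b$ in $G$. A graph with Laplacian $L=D-A$ has Laplacian perfect state transfer between $a,b$ at time $\tau$ if $\exp(i\tau L)\mathbf{e}_a=\gamma\mathbf{e}_b$ for some $\gamma\in\mathbb{C}$. *)

From HB Require Import structures.
From mathcomp Require Import all_boot all_order all_algebra.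
From mathcomp Require Import all_classical all_reals all_analysis.
From mathcomp Require Import complex.

Set Implicit Arguments.
Unset Strict Implicit.
Unset Printing Implicit Defensive.

Import Order.TTheory GRing.Theory Num.Theory.
Local Open Scope ring_scope.

Definition simple_graph (T : finType) (e : rel T) : Prop :=
  symmetric e /\ irreflexive e.

(* The join K_1 \/ H : new vertex [None] (= u) adjacent to every vertex
   [Some a] of H. *)
Definition join_K1 (T : finType) (e : rel T) : rel (option T) :=
  fun x y =>
    match x, y with
    | None, None => false
    | None, Some _ => true
    | Some _, None => true
    | Some a, Some b => e a b
    end.

Definition blowup2 (T : finType) (e : rel T) : rel ('I_2 * T) :=
  fun p q => e p.2 q.2.

(* Laplacian L = D - A, as a real matrix indexed by 'I_#|T|
   (vertex v corresponds to index enum_rank v). *)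
Definition laplacian (R : realType) (T : finType) (e : rel T) : 'M[R]_#|T| :=
  \matrix_(i, j)
    ((i == j)%:R * #|[set y | e (enum_val i) y]|%:R
     - (e (enum_val i) (enum_val j))%:R).

(* exp(i t M) = cos(t M) + i sin(t M), entrywise, via the power series
   sum_k (i t)^k M^k / k!, split into its real (even k) and
   imaginary (odd k) parts. *)
Definition mx_cos_entry (R : realType) (m : nat) (t : R) (M : 'M[R]_m)
    (i j : 'I_m) : R :=
  limn (fun N => \sum_(k < N)
          ((-1) ^+ k * t ^+ (2 * k) / ((2 * k)`!)%:R) * (M ^+ (2 * k)) i j).

Definition mx_sin_entry (R : realType) (m : nat) (t : R) (M : 'M[R]_m)
    (i j : 'I_m) : R :=
  limn (fun N => \sum_(k < N)
          ((-1) ^+ k * t ^+ (2 * k).+1 / ((2 * k).+1`!)%:R)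
            * (M ^+ (2 * k).+1) i j).

Definition expi_entry (R : realType) (m : nat) (t : R) (M : 'M[R]_m)
    (i j : 'I_m) : R[i] :=
  ((mx_cos_entry t M i j) +i* (mx_sin_entry t M i j))%C.

(* Laplacian perfect state transfer between a and b at time tau:
   exp(i tau L) e_a = gamma e_b for some complex gamma. *)
Definition laplacian_pst (R : realType) (T : finType) (e : rel T)
    (a b : T) (tau : R) : Prop :=
  exists gamma : R[i], forall x : T,
    expi_entry tau (laplacian R e) (enum_rank x) (enum_rank a)
    = gamma * (x == b)%:R.

From HB Require Import structures.
From mathcomp Require Import all_boot all_order all_algebra.
From mathcomp Require Import all_classical all_reals all_analysis.
From mathcomp Require Import complex.
From mathcomp Require Import ring.

Set Implicit Arguments.
Unset Strict Implicit.
Unset Printing Implicit Defensive.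

Import Order.TTheory GRing.Theory Num.Theory numFieldNormedType.Exports.
Local Open Scope ring_scope.

(* The amplitudes out of the hub (0,u) live in the 3-dimensional space of
   functions that are constant on the cells {(0,u)}, {(1,u)} and the 2n
   copies of H; these cells form an equitable partition.  There, with N = 2(n+1),
     e_(0,u) = 1/N 1 + 1/N w + 1/2 z,
   where w is n on both hubs and -1 elsewhere (L w = N w) and z is 1, -1 on
   the two hubs and 0 elsewhere (L z = 2n z).  At time pi/2 the three phases
   are 1, (-1)^(n+1) and (-1)^n, so the amplitude left at (0,u) is
   (1 + (-1)^n)/N: it vanishes iff n is odd, and then everything sits at
   (1,u). *)

Lemma mx_pow_eigen_expansion (R : comPzRingType) (m : nat) (M : 'M[R]_m)
    (I : finType) (lam : I -> R) (P : I -> 'I_m -> R) (j : 'I_m) :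
  (forall r i, \sum_l M i l * P r l = lam r * P r i) ->
  (forall i, (i == j)%:R = \sum_r P r i) ->
  forall k i, (M ^+ k) i j = \sum_r lam r ^+ k * P r i.
Proof.
move=> eigenP deltaE; elim=> [|k IHk] i.
  by rewrite expr0 mxE deltaE; apply: eq_bigr => r _; rewrite expr0 mul1r.
rewrite exprS -mulmxE mxE.
under eq_bigr do rewrite IHk mulr_sumr.
rewrite exchange_big /=; apply: eq_bigr => r _.
under eq_bigr do rewrite mulrCA.
by rewrite -mulr_sumr eigenP exprS mulrCA mulrA.
Qed.

Section SpectralEntries.
Variables (R : realType) (m : nat) (M : 'M[R]_m) (i j : 'I_m).
Variables (I : finType) (lam a : I -> R).
Hypothesis powE : forall k, (M ^+ k) i j = \sum_r lam r ^+ k * a r.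

Lemma mx_cos_entry_expansion t :
  mx_cos_entry t M i j = \sum_r cos (t * lam r) * a r.
Proof.
rewrite /mx_cos_entry; apply/cvg_lim => //.
suff -> : (fun N => \sum_(k < N) ((-1) ^+ k * t ^+ (2 * k) / ((2 * k)`!)%:R)
            * (M ^+ (2 * k)) i j)
  = (fun N => \sum_r series (cos_coeff' (t * lam r)) N * a r).
  apply: cvg_big => [|r _]; first exact: add_continuous.
  exact: cvgMr_tmp (@cvg_cos_coeff' _ (t * lam r)).
apply/funext => N; under eq_bigr do rewrite powE mulr_sumr.
rewrite exchange_big /=; apply: eq_bigr => r _.
rewrite /series /= big_mkord mulr_suml; apply: eq_bigr => k _.
by rewrite /cos_coeff' -mul2n exprMn -exprnP exprM; ring.
Qed.

Lemma mx_sin_entry_expansion t :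
  mx_sin_entry t M i j = \sum_r sin (t * lam r) * a r.
Proof.
rewrite /mx_sin_entry; apply/cvg_lim => //.
suff -> : (fun N => \sum_(k < N) ((-1) ^+ k * t ^+ (2 * k).+1 / ((2 * k).+1`!)%:R)
            * (M ^+ (2 * k).+1) i j)
  = (fun N => \sum_r series (sin_coeff' (t * lam r)) N * a r).
  apply: cvg_big => [|r _]; first exact: add_continuous.
  exact: cvgMr_tmp (@cvg_sin_coeff' _ (t * lam r)).
apply/funext => N; under eq_bigr do rewrite powE mulr_sumr.
rewrite exchange_big /=; apply: eq_bigr => r _.
rewrite /series /= big_mkord mulr_suml; apply: eq_bigr => k _.
by rewrite /sin_coeff' -mul2n exprMn -exprnP; ring.
Qed.

End SpectralEntries.

Section LaplacianExpansion.
Variables (R : realType) (T : finType) (e : rel T).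

Lemma laplacian_apply (w : T -> R) (x : T) :
  \sum_j laplacian R e (enum_rank x) j * w (enum_val j)
  = \sum_y (e x y)%:R * (w x - w y).
Proof.
rewrite (reindex enum_rank) /=; last first.
  by exists enum_val => y _; rewrite ?enum_rankK ?enum_valK.
under eq_bigr do rewrite !mxE !enum_rankK (inj_eq enum_rank_inj) mulrBl.
under [RHS]eq_bigr do rewrite mulrBr.
rewrite !sumrB; congr (_ - _).
rewrite (bigD1 x) //= eqxx mul1r big1 ?addr0; last first.
  by move=> y /negbTE; rewrite eq_sym => ->; rewrite !mul0r.
rewrite -mulr_suml -sum1_card natr_sum big_mkcond /=; congr (_ * _).
by apply: eq_bigr => y _; rewrite inE; case: (e x y).
Qed.

Variables (I : finType) (lam : I -> R) (P : I -> T -> R) (a : T).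
Hypothesis eigenP :
  forall r x, \sum_y (e x y)%:R * (P r x - P r y) = lam r * P r x.
Hypothesis deltaE : forall x, (x == a)%:R = \sum_r P r x.

Lemma laplacian_pow_expansion k x :
  (laplacian R e ^+ k) (enum_rank x) (enum_rank a) = \sum_r lam r ^+ k * P r x.
Proof.
rewrite (@mx_pow_eigen_expansion _ _ _ _ lam (fun r l => P r (enum_val l)))
  ?enum_rankK //.
  by move=> r l; rewrite -{1}[l]enum_valK laplacian_apply eigenP.
by move=> l; rewrite -deltaE -{1}[l]enum_valK (inj_eq enum_rank_inj).
Qed.

Lemma expi_laplacian_expansion t x :
  expi_entry t (laplacian R e) (enum_rank x) (enum_rank a)
  = ((\sum_r cos (t * lam r) * P r x) +i* (\sum_r sin (t * lam r) * P r x))%C.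
Proof.
by rewrite /expi_entry (mx_cos_entry_expansion (laplacian_pow_expansion^~ x))
  (mx_sin_entry_expansion (laplacian_pow_expansion^~ x)).
Qed.

End LaplacianExpansion.

Lemma sum_option (V : nmodType) (T : finType) (F : option T -> V) :
  \sum_(b : option T) F b = F None + \sum_(t : T) F (Some t).
Proof.
rewrite (bigD1 None) //=; congr (_ + _).
rewrite (reindex_omap Some id) /=; last by move=> [t|].
by apply: eq_bigl => t; rewrite eqxx.
Qed.

Lemma cos_pimulrn (R : realType) (m : nat) : cos (pi *+ m : R) = (-1) ^+ m.
Proof. by rewrite -[pi *+ m]add0r (alternatingn (@cosDpi R)) cos0 mulr1. Qed.

Lemma sin_pimulrn (R : realType) (m : nat) : sin (pi *+ m : R) = 0.
Proof. by rewrite -[pi *+ m]add0r (alternatingn (@sinDpi R)) sin0 mulr0. Qed.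

Section JoinBlowup.
Variables (R : realType) (T : finType) (e : rel T).
Local Notation n := #|T|.
Local Notation G := (blowup2 (join_K1 e)).
Local Notation hub := (@Ordinal 2 0 isT, None : option T).

Let cardS_neq0 : n%:R + 1 != 0 :> R.
Proof. by rewrite natr1 pnatr_eq0. Qed.

Definition cell_fun (a0 a1 c : R) (x : 'I_2 * option T) : R :=
  if x.2 is None then (if x.1 == ord0 then a0 else a1) else c.

Lemma sum_blowup_join (F : 'I_2 * option T -> R) :
  \sum_y F y = \sum_(l < 2) (F (l, None) + \sum_t F (l, Some t)).
Proof.
rewrite (eq_bigr (fun y => F (y.1, y.2))); last by case.
rewrite -(pair_bigA _ (fun l b => F (l, b))).
by apply: eq_bigr => l _; rewrite sum_option.
Qed.

Lemma laplacian_cell_fun a0 a1 c x :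
  \sum_y (G x y)%:R * (cell_fun a0 a1 c x - cell_fun a0 a1 c y)
  = cell_fun (2 * n%:R * (a0 - c)) (2 * n%:R * (a1 - c)) (2 * c - a0 - a1) x.
Proof.
rewrite sum_blowup_join !big_ord_recl big_ord0 addr0.
case: x => l [t|]; rewrite /blowup2 /cell_fun /=.
  rewrite !mul1r big1 => [|s _]; last by rewrite subrr mulr0.
  by ring.
rewrite !mul0r !add0r; under eq_bigr do rewrite mul1r.
by rewrite sumr_const -mulr_natr; case: (l == ord0); ring.
Qed.

Definition hub_eigenvalue (r : 'I_3) : R :=
  match val r with 0 => 0 | 1 => 2 * (n%:R + 1) | _ => 2 * n%:R end.

Definition hub_component (r : 'I_3) : 'I_2 * option T -> R :=
  let N := 2 * (n%:R + 1) in
  match val r with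
  | 0 => cell_fun N^-1 N^-1 N^-1
  | 1 => cell_fun (n%:R / N) (n%:R / N) (- N^-1)
  | _ => cell_fun 2^-1 (- 2^-1) 0
  end.

Lemma hub_component_eigen r x :
  \sum_y (G x y)%:R * (hub_component r x - hub_component r y)
  = hub_eigenvalue r * hub_component r x.
Proof.
case: r => [[|[|[|//]]] ?];
  rewrite /hub_component /hub_eigenvalue /= laplacian_cell_fun;
  case: x => l [t|]; rewrite /cell_fun /=; try case: (l == ord0);
  by field; rewrite ?cardS_neq0.
Qed.

Lemma delta_hub_decomposition x : (x == hub)%:R = \sum_r hub_component r x.
Proof.
rewrite !big_ord_recl big_ord0 /hub_component /cell_fun /=.
by case: x => [[[|[|//]] ?] [t|]] /=; field; rewrite ?cardS_neq0.
Qed.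

Lemma expi_pihalf_hub x :
  let s := (-1) ^+ n : R in let N := 2 * (n%:R + 1) in
  expi_entry (pi / 2) (laplacian R G) (enum_rank x) (enum_rank hub)
  = (cell_fun ((1 + s) / N) ((1 - (2 * n%:R + 1) * s) / N) ((1 + s) / N) x)%:C%C.
Proof.
have pihalf_mul2 k : pi / 2 * (2 * k%:R) = pi *+ k :> R.
  by rewrite -mulr_natr; field.
rewrite (expi_laplacian_expansion hub_component_eigen delta_hub_decomposition).
rewrite !big_ord_recl !big_ord0 /hub_eigenvalue /=.
rewrite mulr0 cos0 sin0 natr1 !pihalf_mul2 !cos_pimulrn !sin_pimulrn.
rewrite /hub_component /cell_fun /=.
congr (_ +i* _)%C; last by rewrite !mul0r !addr0.
case: x => l [t|] /=; try case: (l == ord0);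
  by rewrite exprS; field; rewrite ?cardS_neq0.
Qed.

End JoinBlowup.

Theorem corollary10 (R : realType) (n : nat) (H : rel 'I_n) :
  simple_graph H ->
  (laplacian_pst (blowup2 (join_K1 H))
     ((@Ordinal 2 0 isT), None) ((@Ordinal 2 1 isT), None) (pi / 2 : R)
   <-> odd n).
Proof.
move=> _; have n1 : n%:R + 1 != 0 :> R by rewrite natr1 pnatr_eq0.
have amplitude := @expi_pihalf_hub R _ H; rewrite card_ord in amplitude.
rewrite -signr_odd in amplitude.
split=> [[gamma /(_ (@Ordinal 2 0 isT, None))] | odd_n].
  rewrite amplitude /cell_fun /= mulr0 => -[].
  case: (odd n) => //; rewrite expr0 => /eqP.
  rewrite -[1 + 1 : R]/(2%:R) !mulf_eq0 invr_eq0 mulf_eq0 pnatr_eq0.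
  by rewrite (negbTE n1).
exists 1 => x; rewrite amplitude odd_n expr1 subrr mul0r mul1r.
have -> : (1 - (2 * n%:R + 1) * -1) / (2 * (n%:R + 1)) = 1 :> R by field.
by case: x => [[[|[|//]] ?] [t|]].
Qed.
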